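(* Let $H:2^M\to\mathbb{R}$ be a function with $H(\emptyset)=0$, and let $T^1,\dots,T^n\subseteq M$ satisfy $\bigcap_{i=1}^nT^i=\emptyset$. Suppose that either (1) $H$ is supermodular, or (2) for every $1\le i,j\le n$, $T^i\cup T^j\in\{T^i,T^j\}$. Then $$\sum_{i=1}^nH(T^i)\le\sum_{i=1}^{n-1}H\Big(T^{i+1}\cup\bigcap_{\ell=1}^{i}T^\ell\Big).$$
   Context: $M$ is a finite set. A function $H:2^M\to\mathbb R$ is supermodular if $H(S)+H(T)\le H(S\cup T)+H(S\cap T)$ for all $S,T\subseteq M$. *)

From HB Require Import structures.
From mathcomp Require Import all_boot all_order all_algebra.
Set Implicit Arguments. Unset Strict Implicit. Unset Printing Implicit Defensive.
Import Order.TTheory GRing.Theory Num.Theory.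
Local Open Scope ring_scope.

Definition supermodular (R : numDomainType) (M : finType) (H : {set M} -> R) :=
  forall S U : {set M}, H S + H U <= H (S :|: U) + H (S :&: U).

From HB Require Import structures.
From mathcomp Require Import all_boot all_order all_algebra.
From mathcomp Require Import lra.
Import Order.TTheory GRing.Theory Num.Theory.
Local Open Scope ring_scope.
Set Implicit Arguments.

(* Write C_i for the prefix intersection T^1 ∩ ... ∩ T^i, so C_1 = T^1 and
   C_n = ∅.  Each pair (T^(i+1), C_i) satisfies the exchange inequality
   H(T^(i+1)) + H(C_i) <= H(T^(i+1) ∪ C_i) + H(C_(i+1)): under supermodularity
   directly, and in the chain case because C_i is itself some T^k, so the pair
   is nested and the inequality is an equality.  Summing these telescopes the
   H(C_i) away, leaving H(C_n) = H(∅) = 0. *)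

Section Telescope.
Variables (R : realDomainType) (a b c : nat -> R).

Lemma sum_telescope_le m :
  (0 < m)%N -> c 1%N = a 1%N ->
  (forall i, (0 < i < m)%N -> a i.+1 + c i <= b i + c i.+1) ->
  \sum_(1 <= i < m.+1) a i <= c m + \sum_(1 <= i < m) b i.
Proof.
move=> m_gt0 c1 hstep; elim: m m_gt0 hstep => [//|m IH] _ hstep.
have [->|m_gt0] := posnP m; first by rewrite big_nat1 big_geq // c1 addr0.
rewrite big_nat_recr //= [X in _ <= _ + X]big_nat_recr //=.
have hIH : \sum_(1 <= i < m.+1) a i <= c m + \sum_(1 <= i < m) b i.
  by apply: IH m_gt0 _ => i /andP[i_gt0 lt_im]; apply: hstep; rewrite i_gt0 ltnW.
have hm : a m.+1 + c m <= b m + c m.+1 by apply: hstep; rewrite m_gt0 ltnSn.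
lra.
Qed.

End Telescope.

Lemma modular_nested (R : zmodType) (M : finType) (H : {set M} -> R)
    (A B : {set M}) :
  A \subset B -> H A + H B = H (A :|: B) + H (A :&: B).
Proof. by move=> sAB; rewrite (setUidPr sAB) (setIidPl sAB) addrC. Qed.

Section PrefixCap.
Variables (M : finType) (Ts : nat -> {set M}).

Definition prefix_cap (i : nat) : {set M} := \bigcap_(1 <= l < i.+1) Ts l.

Lemma prefix_cap1 : prefix_cap 1 = Ts 1.
Proof. by rewrite /prefix_cap big_nat1. Qed.

Lemma prefix_capS i : (0 < i)%N -> prefix_cap i.+1 = prefix_cap i :&: Ts i.+1.
Proof. by move=> i_gt0; rewrite /prefix_cap big_nat_recr. Qed.

Variable n : nat.
Hypothesis union_chain : forall i j : nat, (1 <= i <= n)%N -> (1 <= j <= n)%N ->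
  Ts i :|: Ts j = Ts i \/ Ts i :|: Ts j = Ts j.

Lemma prefix_cap_chain i :
  (1 <= i <= n)%N -> exists2 k, (1 <= k <= n)%N & prefix_cap i = Ts k.
Proof.
elim: i => [//|i IH] /andP[_ le_in].
have [i0|i_gt0] := posnP i.
  by rewrite i0 in le_in *; exists 1%N; rewrite ?prefix_cap1.
rewrite prefix_capS //.
have [k kn ->] : exists2 k, (1 <= k <= n)%N & prefix_cap i = Ts k.
  by apply: IH; rewrite i_gt0 ltnW.
have i1n : (1 <= i.+1 <= n)%N by [].
case: (union_chain _ _ kn i1n) => [/setUidPl/setIidPr ->|/setUidPr/setIidPl ->].
- by exists i.+1.
- by exists k.
Qed.

End PrefixCap.

Arguments prefix_cap_chain {M Ts n}.

Lemma prefix_cap_exchange (R : numDomainType) (M : finType) (H : {set M} -> R)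
    (n : nat) (Ts : nat -> {set M}) i :
  supermodular H \/
    (forall i j : nat, (1 <= i <= n)%N -> (1 <= j <= n)%N ->
       Ts i :|: Ts j = Ts i \/ Ts i :|: Ts j = Ts j) ->
  (0 < i < n)%N ->
  H (Ts i.+1) + H (prefix_cap Ts i)
    <= H (Ts i.+1 :|: prefix_cap Ts i) + H (prefix_cap Ts i.+1).
Proof.
move=> hcase /andP[i_gt0 lt_in]; rewrite prefix_capS // [_ :&: Ts _]setIC.
case: hcase => [supH|chain]; first exact: supH.
have [k kn ->] : exists2 k, (1 <= k <= n)%N & prefix_cap Ts i = Ts k.
  by apply: (prefix_cap_chain chain); rewrite i_gt0 ltnW.
have i1n : (1 <= i.+1 <= n)%N by [].
case: (chain _ _ kn i1n) => [/setUidPl sik|/setUidPr ski].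
- by rewrite modular_nested.
- by rewrite addrC modular_nested // setUC setIC.
Qed.

Theorem claim4p4 (R : realFieldType) (M : finType) (H : {set M} -> R)
  (n : nat) (Ts : nat -> {set M})
  (H0 : H set0 = 0)
  (hcap : \bigcap_(1 <= l < n.+1) Ts l = set0)
  (hcase : supermodular H \/
           (forall i j : nat, (1 <= i <= n)%N -> (1 <= j <= n)%N ->
              Ts i :|: Ts j = Ts i \/ Ts i :|: Ts j = Ts j)) :
  \sum_(1 <= i < n.+1) H (Ts i)
    <= \sum_(1 <= i < n) H (Ts i.+1 :|: \bigcap_(1 <= l < i.+1) Ts l).
Proof.
have [->|n_gt0] := posnP n; first by rewrite !big_geq.
have := @sum_telescope_le R (H \o Ts) (fun i => H (Ts i.+1 :|: prefix_cap Ts i))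
  (H \o prefix_cap Ts) n n_gt0.
rewrite /= prefix_cap1 [prefix_cap Ts n]hcap H0 add0r; apply=> // i.
exact: prefix_cap_exchange hcase.
Qed.
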